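(* Let $R$ be a ring, $X$ a compact metrizable space, $E\subset X$ a non-empty closed subspace with $Y=X\setminus E$ dense in $X$. Two free $(X,Y,E)$-controlled $R$-modules $R\langle A\rangle_\alpha$ and $R\langle B\rangle_\beta$ are isomorphic in the category of free controlled $R$-modules and controlled homomorphisms if and only if (1) the underlying $R$-modules $R\langle A\rangle$ and $R\langle B\rangle$ are isomorphic, and (2) they have the same support, $\alpha(A)'=\beta(B)'$. If the supports are non-empty then condition (1) holds automatically. Moreover, every compact subset $K\subset E$ is the support of some free controlled $R$-module.
   Context: $R\langle A\rangle$ denotes the free right $R$-module with basis $A$; the carrier $\operatorname{carr}(x)\subset A$ of $x\in R\langle A\rangle$ is the finite set of basis elements appearing with nonzero coefficient in $x$. A free controlled $R$-module $R\langle A\rangle_\alpha$ is a free $R$-module $R\langle A\rangle$ together with a function $\alpha\colon A\to Y$ such that $\alpha^{-1}(K)$ is finite for every compact $K\subset Y$. Its support is the derived set $\alpha(A)'$ of $\alpha(A)$ in $X$ (which lies in $E$). A controlled homomorphism $\varphi\colon R\langle A\rangle_\alpha\to R\langle B\rangle_\beta$ is an $R$-module homomorphism such that for every $x\in E$ and every neighbourhood $U$ of $x$ in $X$ there is a neighbourhood $V\subset U$ of $x$ in $X$ with $\beta(\operatorname{carr}(\varphi(a)))\subset U$ for all $a\in A$ with $\alpha(a)\in V$. *)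

From HB Require Import structures.
From mathcomp Require Import all_boot all_order all_algebra.
From mathcomp Require Import all_classical all_reals all_analysis.
Set Implicit Arguments. Unset Strict Implicit. Unset Printing Implicit Defensive.
Import Order.TTheory GRing.Theory Num.Theory.
Local Open Scope classical_set_scope.
Local Open Scope ring_scope.

(** The free right R-module R<A> with basis A: finitely supported functions A -> R. *)
Record fsm (R : nzRingType) (A : Type) := FSM {
  fsm_fun :> A -> R;
  fsm_fin : finite_set [set a | fsm_fun a != 0] }.

Section FreeModule.
Context {R : nzRingType} {A : Type}.

Definition carr (x : fsm R A) : set A := [set a | x a != 0].

Lemma fsm_zero_fin : finite_set [set a : A | (0 : R) != 0].
Proof. by apply: (sub_finite_set _ (finite_set0 A)) => a /=; rewrite eqxx. Qed.
Definition fsm_zero : fsm R A := FSM fsm_zero_fin.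

Lemma fsm_add_fin (x y : fsm R A) : finite_set [set a | x a + y a != 0].
Proof.
have hU : finite_set ([set a | x a != 0] `|` [set a | y a != 0]).
  by rewrite finite_setU; split; [exact: fsm_fin | exact: fsm_fin].
apply: (sub_finite_set _ hU).
move=> a /= h; case: (eqVneq (x a) 0) => [xa|]; [right|by left].
by apply: contraNneq h => ya; rewrite xa ya addr0.
Qed.
Definition fsm_add (x y : fsm R A) : fsm R A := FSM (fsm_add_fin x y).

Lemma fsm_scale_fin (x : fsm R A) (r : R) : finite_set [set a | x a * r != 0].
Proof.
apply: (sub_finite_set _ (fsm_fin x)) => a /= h.
by apply: contraNneq h => ->; rewrite mul0r.
Qed.
Definition fsm_scale (x : fsm R A) (r : R) : fsm R A := FSM (fsm_scale_fin x r).

Lemma delta_fin (a : A) : finite_set [set b | (if `[< b = a >] then 1 else 0 : R) != 0].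
Proof.
apply: (sub_finite_set _ (finite_set1 a)) => b /=.
by case: asboolP => // _; rewrite eqxx.
Qed.
Definition delta (a : A) : fsm R A := FSM (delta_fin a).

End FreeModule.

Definition is_rhom {R : nzRingType} {A B : Type} (f : fsm R A -> fsm R B) :=
  (forall x y, f (fsm_add x y) = fsm_add (f x) (f y)) /\
  (forall x r, f (fsm_scale x r) = fsm_scale (f x) r).

Definition module_iso (R : nzRingType) (A B : Type) :=
  exists (f : fsm R A -> fsm R B) (g : fsm R B -> fsm R A),
    [/\ is_rhom f, is_rhom g, cancel f g & cancel g f].

(** (alpha : A -> Y) makes R<A>_alpha a free (X,Y,E)-controlled module,
    where Y = X \ E : alpha lands in Y and alpha^-1(K) is finite for every
    compact K contained in Y. *)
Definition controlled_basis {X : topologicalType} (E : set X) {A : Type}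
    (alpha : A -> X) :=
  (forall a, ~ E (alpha a)) /\
  (forall K : set X, K `<=` ~` E -> compact K -> finite_set (alpha @^-1` K)).

Definition fcm_support {X : topologicalType} {A : Type} (alpha : A -> X) : set X :=
  limit_point (range alpha).

Definition controlled {X : topologicalType} (E : set X) {R : nzRingType}
    {A B : Type} (alpha : A -> X) (beta : B -> X) (f : fsm R A -> fsm R B) :=
  forall x, E x -> forall U, nbhs x U ->
    exists V, [/\ nbhs x V, V `<=` U &
      forall a, V (alpha a) -> beta @` carr (f (delta a)) `<=` U].

Definition controlled_iso {X : topologicalType} (E : set X) (R : nzRingType)
    {A B : Type} (alpha : A -> X) (beta : B -> X) :=
  exists (f : fsm R A -> fsm R B) (g : fsm R B -> fsm R A),
    [/\ is_rhom f, is_rhom g, controlled E alpha beta f,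
        controlled E beta alpha g & cancel f g /\ cancel g f].

From HB Require Import structures.
From mathcomp Require Import all_boot all_order all_algebra.
From mathcomp Require Import all_classical all_reals all_analysis.
From mathcomp Require Import finmap.
Import Order.TTheory GRing.Theory Num.Theory.
Local Open Scope classical_set_scope.
Local Open Scope ring_scope.
Set Implicit Arguments. Unset Strict Implicit. Unset Printing Implicit Defensive.

(** Supports lie in [E], and a controlled map can only send a basis element
    lying near a point of [E] to basis elements nearby, so an injective controlled
    homomorphism gives an inclusion of supports.
    Conversely, a basis with non-empty support is countably infinite: [Y] is
    exhausted by countably many compact sets, each containing finitely many basis
    points, while a limit point needs infinitely many.  Enumerate both bases as
    sequences [u] and [v]: each point of the common support [S] is approached by
    infinitely many terms of each, and all but finitely many terms are close to
    [S].  A back-and-forth construction matches indices bijectively so that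
    matched terms become arbitrarily close, and the induced bijection of bases is
    a controlled isomorphism.  If the support is empty, every homomorphism is
    controlled.  Finally, a compact [C] inside [E] is the support of the basis
    made, for each [n], of points of the dense set [Y] within [1/(n+1)] of the
    points of a finite [1/(n+1)]-net of [C]. *)

Section LimitPoints.
Context {T : topologicalType}.
Implicit Types (P G U : set T) (x : T).

Lemma closed_nbhsC G x : closed G -> ~ G x -> nbhs x (~` G).
Proof. by move=> cG Gx; apply: open_nbhs_nbhs; split => //; exact: closed_openC. Qed.

Lemma finite_set_nbhsC G x : accessible_space T ->
  finite_set G -> ~ G x -> nbhs x (~` G).
Proof. by move=> T1 fG; apply: closed_nbhsC; exact: (accessible_finite_set_closed).1. Qed.

Lemma limit_pointIr P U x : nbhs x U -> limit_point P x -> limit_point (P `&` U) x.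
Proof.
move=> xU lPx V xV; have [y [yx Py [Uy Vy]]] := lPx _ (filterI xU xV).
by exists y.
Qed.

Lemma limit_pointDfin P G x : accessible_space T -> finite_set G ->
  limit_point P x -> limit_point (P `\` G) x.
Proof.
move=> T1 fG lPx U xU.
have fGx : finite_set (G `\ x) by apply: sub_finite_set fG => y [].
have xGx : nbhs x (~` (G `\ x)) by apply: finite_set_nbhsC => // -[_]; apply.
have [y [yx Py [Uy GUy]]] := lPx _ (filterI xU xGx).
by exists y; split => //; split => // Gy; apply: GUy; split => // /eqP; rewrite (negPf yx).
Qed.

Lemma limit_point_finite P x : accessible_space T -> finite_set P -> ~ limit_point P x.
Proof.
move=> T1 fP /(limit_pointDfin T1 fP) /(_ setT filterT).
by rewrite setDv => -[? []].
Qed.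

Lemma compact_infinite_limit_point (C P : set T) : compact C -> P `<=` C ->
  infinite_set P -> exists2 z, C z & limit_point P z.
Proof.
move=> cC PC Pinf.
pose F := [set Q : set T | finite_set (P `\` Q)].
have FF : ProperFilter F.
  split; first by rewrite /F /= setD0.
  split; first by rewrite /F /= setDT.
    by move=> Q Q' FQ FQ'; rewrite /F /= setDIr finite_setU.
  by move=> Q Q' QQ'; apply: sub_finite_set => y [Py nQ'y]; split => // /QQ'.
have FC : F C by rewrite /F /= (_ : P `\` C = set0) //; apply/seteqP; split => y // [/PC].
have [z [Cz clz]] := cC F FF FC.
exists z => // U zU.
have FPz : F (P `\ z).
  by apply: sub_finite_set (finite_set1 z) => y [Py nPzy]; apply: contrapT => yz; exact: nPzy.
have [y [[Py yz] Uy]] := clz _ _ FPz zU.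
by exists y; split => //; apply/eqP.
Qed.

End LimitPoints.

Lemma not_limit_point_range {T : topologicalType} {A : Type} (alpha : A -> T) (B : set T) z :
  accessible_space T -> nbhs z B -> finite_set (alpha @^-1` B) -> ~ limit_point (range alpha) z.
Proof.
move=> T1 zB fin /(limit_pointIr zB); apply: limit_point_finite T1 _.
by apply: sub_finite_set (finite_image alpha fin) => _ [[a _ <-] Ba]; exists a.
Qed.

Lemma enum_countable_infinite (A : Type) :
  countable [set: A] -> infinite_set [set: A] ->
  exists (e : nat -> A) (e' : A -> nat), cancel e e' /\ cancel e' e.
Proof.
move=> cA iA; have /card_set_bijP [f [_ fi fs]] := eq_card_nat cA iA.
have /choice [g fgK] : forall n : nat, exists a, f a = n.
  by move=> n; have [a _ <-] := fs n I; exists a.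
by exists g, f; split => // a; apply: fi; rewrite ?in_setT ?fgK.
Qed.

Section MetricFacts.
Context {K : realType} {X : metricType K}.

Lemma natSinv_gt0 (n : nat) : 0 < n.+1%:R^-1 :> K.
Proof. by rewrite invr_gt0 ltr0Sn. Qed.

Lemma natSinv_le (m n : nat) : (m <= n)%N -> n.+1%:R^-1 <= m.+1%:R^-1 :> K.
Proof. by move=> mn; rewrite lef_pV2 ?posrE ?ltr0Sn // ler_nat ltnS. Qed.

Lemma exists_natSinv_lt (r : K) : 0 < r -> exists n : nat, n.+1%:R^-1 < r.
Proof.
move=> r0; have [N _ hN] := near_infty_natSinv_lt (PosNum r0).
by exists N; exact: (hN N (leqnn N)).
Qed.

Lemma metric_accessible : accessible_space X.
Proof. exact/hausdorff_accessible/metric_hausdorff. Qed.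

Lemma mball_open (x : X) (r : K) : open (ball x r).
Proof.
rewrite openE => y xy; apply/nbhs_ballP.
have ry : 0 < r - mdist x y by rewrite subr_gt0; move: xy; rewrite ballEmdist.
exists (r - mdist x y) => //= z; rewrite !ballEmdist /= => yz.
by apply: le_lt_trans (metric_triangle x y z) _; rewrite -ltrBrDl.
Qed.

Lemma half_gt0 (r : K) : 0 < r -> 0 < r / 2.
Proof. by move=> r0; rewrite divr_gt0. Qed.

Lemma nbhs_closed_ball (x : X) (r : K) : 0 < r -> nbhs x (closed_ball x r).
Proof. by move=> r0; apply: filterS (nbhsx_ballx _ _ r0); exact: subset_closed_ball. Qed.

Lemma open_bigcup_ball (S : set X) (r : K) : open (\bigcup_(s in S) ball s r).
Proof. by apply: bigcup_open => s _; exact: mball_open. Qed.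

End MetricFacts.

Lemma fcm_support_infinite {K : realType} {X : metricType K} {A : Type} (alpha : A -> X) :
  fcm_support alpha !=set0 -> infinite_set [set: A].
Proof.
move=> [x lx] fA.
exact: limit_point_finite metric_accessible (finite_image alpha fA) lx.
Qed.

Section ControlledBasis.
Context {K : realType} {X : metricType K} (E : set X) {A : Type} (alpha : A -> X).
Hypotheses (cX : compact [set: X]) (cE : closed E) (hA : controlled_basis E alpha).

Lemma fcm_support_subset : fcm_support alpha `<=` E.
Proof.
have [aY afin] := hA.
move=> x lx; apply: contrapT => Ex.
have /nbhs_ballP [r /= r0 rE] := closed_nbhsC cE Ex.
set B := closed_ball x (r / 2).
have BE : B `<=` ~` E by move=> z /(subset_closure_half r0); apply: rE.
have cB : compact B by apply: (subclosed_compact _ cX) => //; exact: closed_ball_closed.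
exact: not_limit_point_range metric_accessible (nbhs_closed_ball x (half_gt0 r0)) (afin B BE cB) lx.
Qed.

Lemma controlled_basis_countable : countable [set: A].
Proof.
have [aY afin] := hA.
pose D n := \bigcup_(e in E) ball e (n.+1%:R^-1).
have cD n : compact (~` D n).
  by apply: (subclosed_compact _ cX) => //; exact/open_closedC/open_bigcup_ball.
have DE n : ~` D n `<=` ~` E by move=> z Dz Ez; apply: Dz; exists z => //; exact: ballxx.
have cov : [set: A] `<=` \bigcup_(n in [set: nat]) alpha @^-1` (~` D n).
  move=> a _.
  have /nbhs_ballP [r /= r0 rE] := closed_nbhsC cE (aY a).
  have [n nr] := exists_natSinv_lt r0.
  by exists n => // -[e Ee /ball_sym ea]; apply: rE e (le_ball (ltW nr) ea) Ee.
apply: sub_countable (subset_card_le cov) _.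
apply: bigcup_countable => [|n _]; first exact: countableP.
exact/finite_set_countable/afin.
Qed.

Lemma fcm_support_enum : fcm_support alpha !=set0 ->
  exists (e : nat -> A) (e' : A -> nat), cancel e e' /\ cancel e' e.
Proof.
move=> ne; apply: enum_countable_infinite controlled_basis_countable _.
exact: fcm_support_infinite ne.
Qed.

End ControlledBasis.


Section FreeModules.
Context {R : nzRingType}.

Lemma fsm_ext {A : Type} (x y : fsm R A) : x =1 y -> x = y.
Proof.
case: x y => f fx [g gy] /= /funext efg; subst g.
by congr FSM; exact: Prop_irrelevance.
Qed.

Lemma rhom0 {A B : Type} (f : fsm R A -> fsm R B) : is_rhom f -> f fsm_zero = fsm_zero.
Proof.
move=> [_ fZ].
have scale0 (C : Type) (x : fsm R C) : fsm_scale x 0 = fsm_zero.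
  by apply: fsm_ext => c /=; rewrite mulr0.
by rewrite -(scale0 _ fsm_zero) fZ scale0.
Qed.

Lemma rhom_delta_neq0 {A B : Type} (f : fsm R A -> fsm R B) (a : A) :
  is_rhom f -> injective f -> exists b, f (delta a) b != 0.
Proof.
move=> rf injf; apply: contrapT => /forallNP f0.
have : delta a = fsm_zero :> fsm R A.
  by apply: injf; rewrite rhom0 //; apply: fsm_ext => b /=; apply/eqP/negbNE/negP/f0.
move=> /(congr1 (fun x : fsm R A => x a)) /=.
by case: asboolP => // _ /eqP; rewrite oner_eq0.
Qed.

Section Reindex.
Context {A B : Type} (phi : A -> B) (psi : B -> A) (psiK : cancel psi phi).

Lemma reindex_fin (x : fsm R A) : finite_set [set b | x (psi b) != 0].
Proof.
apply: sub_finite_set (finite_image phi (fsm_fin x)) => b /= xb.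
by exists (psi b); rewrite ?psiK.
Qed.

Definition reindex (x : fsm R A) : fsm R B := FSM (reindex_fin x).

Lemma reindex_rhom : is_rhom reindex.
Proof. by split=> *; apply: fsm_ext. Qed.

Lemma reindex_delta a b : reindex (delta a) b != 0 -> b = phi a.
Proof. by rewrite /=; case: asboolP => [<- _|_]; rewrite ?psiK ?eqxx. Qed.

End Reindex.

Lemma reindexK {A B : Type} (phi : A -> B) (psi : B -> A) (phiK : cancel phi psi)
    (psiK : cancel psi phi) :
  cancel (reindex psiK) (reindex phiK).
Proof. by move=> x; apply: fsm_ext => a /=; rewrite phiK. Qed.

Lemma module_iso_bij {A B : Type} (phi : A -> B) (psi : B -> A) :
  cancel phi psi -> cancel psi phi -> module_iso R A B.
Proof.
move=> phiK psiK; exists (reindex psiK), (reindex phiK).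
by split; [exact: reindex_rhom|exact: reindex_rhom|exact: reindexK|exact: reindexK].
Qed.

End FreeModules.

Section ControlledMaps.
Context {R : nzRingType} {X : topologicalType} (E : set X) {A B : Type}
  (alpha : A -> X) (beta : B -> X).

Lemma controlled_support_subset (f : fsm R A -> fsm R B) :
  (forall b, ~ E (beta b)) -> fcm_support alpha `<=` E ->
  controlled E alpha beta f -> is_rhom f -> injective f ->
  fcm_support alpha `<=` fcm_support beta.
Proof.
move=> bE sE cf rf injf x lx U xU.
have [V [xV VU fV]] := cf x (sE x lx) U xU.
have [_ [_ [a _ <-] Va]] := lx V xV.
have [b fab] := rhom_delta_neq0 a rf injf.
exists (beta b); split; last by apply: (fV a Va); exists b.
  by apply/eqP => bx; apply: (bE b); rewrite bx; exact: sE.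
by exists b.
Qed.

Lemma controlled_empty_support (f : fsm R A -> fsm R B) :
  (forall a, ~ E (alpha a)) -> fcm_support alpha = set0 -> controlled E alpha beta f.
Proof.
move=> aE s0 x Ex U xU.
have : ~ fcm_support alpha x by rewrite s0.
rewrite /fcm_support not_limit_pointE => -[W xW Wx].
exists (U `&` W); split; [exact: filterI|exact: subIsetl|].
move=> a [_ Wa]; have /Wx ax : (range alpha `&` W) (alpha a) by split; [exists a|].
by case: (aE a); rewrite ax.
Qed.

End ControlledMaps.

Definition controlled_fun {K : realType} {X : metricType K} (E : set X) {A : Type}
    (alpha gamma : A -> X) :=
  forall x, E x -> forall eps : K, 0 < eps ->
    exists2 V, nbhs x V & forall a, V (alpha a) -> ball x eps (gamma a).

Lemma controlled_fun_of_close {K : realType} {X : metricType K} (E : set X) {A : Type}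
    (alpha gamma : A -> X) : (forall a, ~ E (alpha a)) ->
  (forall eps : K, 0 < eps -> finite_set [set a | ~ ball (alpha a) eps (gamma a)]) ->
  controlled_fun E alpha gamma.
Proof.
move=> aE close x Ex eps eps0; have eps2 := half_gt0 eps0.
set F := [set a | ~ ball (alpha a) (eps / 2) (gamma a)].
have xF : ~ (alpha @` F) x by move=> [a _ ax]; apply: (aE a); rewrite ax.
have xFC := finite_set_nbhsC metric_accessible (finite_image alpha (close _ eps2)) xF.
exists (ball x (eps / 2) `&` ~` (alpha @` F)); first exact: filterI (nbhsx_ballx _ _ eps2) xFC.
move=> a [xa aF]; apply: ball_split xa _.
by apply: contrapT => far; apply: aF; exists a.
Qed.

Lemma controlled_reindex {R : nzRingType} {K : realType} {X : metricType K} (E : set X)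
    {A B : Type} (alpha : A -> X) (beta : B -> X) (phi : A -> B) (psi : B -> A)
    (psiK : cancel psi phi) :
  controlled_fun E alpha (beta \o phi) -> controlled E alpha beta (@reindex R _ _ _ _ psiK).
Proof.
move=> ctl x Ex U /nbhs_ballP [eps /= eps0 epsU].
have [V xV Vball] := ctl x Ex eps eps0.
exists (V `&` ball x eps); split; [exact/filterI/nbhsx_ballx|by move=> z [_ /epsU]|].
move=> a [Va _] _ [b ab <-]; rewrite (reindex_delta ab).
by apply: epsU; exact: Vball.
Qed.

Section BackAndForth.
Context {K : realType} {X : metricType K} (S : set X).

Definition close_to (p : X) (r : K) := exists2 s, S s & ball p r s.

Definition close_partner (w : nat -> X) (p : X) (k m : nat) :=
  forall i, (i <= k)%N -> close_to p i.+1%:R^-1 -> ball p (2 * i.+1%:R^-1) (w m).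

Definition frequently_near (w : nat -> X) := forall s, S s -> forall r : K, 0 < r ->
  infinite_set [set m | ball s r (w m)].

Definition eventually_near (w : nat -> X) := forall r : K, 0 < r ->
  finite_set [set n | ~ close_to (w n) r].

Definition partner (w : nat -> X) (p : X) (k : nat) (F : seq nat) :=
  xget 0%N [set m | m \notin F /\ close_partner w p k m].

Lemma partnerP w p k F : frequently_near w ->
  partner w p k F \notin F /\ close_partner w p k (partner w p k F).
Proof.
move=> freq; apply: (@xgetPex _ 0%N [set m | m \notin F /\ close_partner w p k m]).
have [[i [ik pi]]|nlev] := pselect (exists i, (i <= k)%N /\ close_to p i.+1%:R^-1); last first.
  have [m [_ /negP mF]] := infinite_setN0 (infinite_setD infinite_nat (finite_seq F)).
  by exists m; split => // i ik pi; case: nlev; exists i.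
pose P i := `[< (i <= k)%N /\ close_to p i.+1%:R^-1 >].
have Pi : exists i, P i by exists i; exact/asboolP.
have Pk j : P j -> (j <= k)%N by move=> /asboolP [].
have [J /asboolP [Jk [s Ss ps]] Jmax] := ex_maxnP Pi Pk.
(* Approach the witness of the finest level [J <= k] at which [p] is near [S]. *)
have [m [sm /negP mF]] :=
  infinite_setN0 (infinite_setD (freq s Ss _ (natSinv_gt0 J)) (finite_seq F)).
exists m; split => // j jk pj.
have Jj : j.+1%:R^-1 >= J.+1%:R^-1 :> K by apply/natSinv_le/Jmax/asboolP.
by apply: le_ball (ball_triangle ps sm); rewrite mulr2n mulrDl mul1r lerD.
Qed.

Variables u v : nat -> X.

(** [n] and [m] may be matched when one of [u n], [v m] approximates the other
    at every level (up to its own index) at which it is near [S]. *)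
Definition matchable n m := close_partner v (u n) n m \/ close_partner u (v m) m n.

Definition partial_matching (L : seq (nat * nat)) :=
  {in L &, forall p q, (p.1 == q.1) = (p.2 == q.2)} /\ {in L, forall p, matchable p.1 p.2}.

Definition extend_fwd k L := if k \in map fst L then L
  else (k, partner v (u k) k (map snd L)) :: L.
Definition extend_bwd k L := if k \in map snd L then L
  else (partner u (v k) k (map fst L), k) :: L.

Fixpoint matching k :=
  if k is k'.+1 then extend_bwd k' (extend_fwd k' (matching k')) else [::].

Hypotheses (freq_u : frequently_near u) (freq_v : frequently_near v).

Lemma partial_matching_cons L n m : partial_matching L ->
  n \notin map fst L -> m \notin map snd L -> matchable n m ->
  partial_matching ((n, m) :: L).
Proof.
move=> [bijL mL] nL mL' nm; split; last by move=> p; rewrite inE => /predU1P [->|/mL].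
have fresh p : p \in L -> (n == p.1) = false /\ (m == p.2) = false.
  by move=> pL; split; apply/negbTE/eqP => e; [move: nL|move: mL']; rewrite e map_f.
move=> p q; rewrite !inE => /predU1P [->|pL] /predU1P [->|qL] //=; rewrite ?eqxx //.
- by have [-> ->] := fresh _ qL.
- by rewrite eq_sym [p.2 == _]eq_sym; have [-> ->] := fresh _ pL.
- exact: bijL.
Qed.

Lemma extend_fwd_bij k L : partial_matching L -> partial_matching (extend_fwd k L).
Proof.
rewrite /extend_fwd; case: ifPn => // kL bijL.
have [mL close] := partnerP (u k) k (map snd L) freq_v.
by apply: partial_matching_cons => //; left.
Qed.

Lemma extend_bwd_bij k L : partial_matching L -> partial_matching (extend_bwd k L).
Proof.
rewrite /extend_bwd; case: ifPn => // kL bijL.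
have [nL close] := partnerP (v k) k (map fst L) freq_u.
by apply: partial_matching_cons => //; right.
Qed.

Lemma matching_bij k : partial_matching (matching k).
Proof.
elim: k => [|k IH] /=; last exact/extend_bwd_bij/extend_fwd_bij.
by split => p; rewrite in_nil.
Qed.

Lemma extend_fwd_sub k L : {subset L <= extend_fwd k L}.
Proof. by rewrite /extend_fwd; case: ifP => _ p pL //; rewrite inE pL orbT. Qed.

Lemma extend_bwd_sub k L : {subset L <= extend_bwd k L}.
Proof. by rewrite /extend_bwd; case: ifP => _ p pL //; rewrite inE pL orbT. Qed.

Lemma matching_mono k k' : (k <= k')%N -> {subset matching k <= matching k'}.
Proof.
move=> /subnK <-; elim: (k' - k)%N => // d IH p /IH pd.
by rewrite addSn; apply/extend_bwd_sub/extend_fwd_sub.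
Qed.

Lemma matching_fst k : k \in map fst (matching k.+1).
Proof.
apply: sub_map (@extend_bwd_sub k _) _ _.
by rewrite /extend_fwd; case: ifP => // _; rewrite /= inE eqxx.
Qed.

Lemma matching_snd k : k \in map snd (matching k.+1).
Proof. by rewrite /= /extend_bwd; case: ifP => // _; rewrite /= inE eqxx. Qed.

Definition matched n m := exists k, (n, m) \in matching k.

Lemma matchedE n m n' m' : matched n m -> matched n' m' -> (n == n') = (m == m').
Proof.
move=> [k nm] [k' nm']; have [bij _] := matching_bij (maxn k k').
exact: bij (matching_mono (leq_maxl k k') nm) (matching_mono (leq_maxr k k') nm').
Qed.

Lemma matched_matchable n m : matched n m -> matchable n m.
Proof. by move=> [k nm]; have [_ mk] := matching_bij k; exact: mk _ nm. Qed.

Definition sigma n := xget 0%N (matched n).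
Definition tau m := xget 0%N [set n | matched n m].

Lemma matched_sigma n : matched n (sigma n).
Proof.
apply: xgetPex; have /mapP [[n' m] nm /= ->] := matching_fst n.
by exists m, n.+1.
Qed.

Lemma matched_tau m : matched (tau m) m.
Proof.
apply: (@xgetPex _ _ [set n | matched n m]); have /mapP [[n m'] nm /= ->] := matching_snd m.
by exists n, m.+1.
Qed.

Lemma sigmaK : cancel sigma tau.
Proof. by move=> n; apply/eqP; rewrite (matchedE (matched_tau _) (matched_sigma n)). Qed.

Lemma tauK : cancel tau sigma.
Proof. by move=> m; apply/eqP; rewrite -(matchedE (matched_sigma _) (matched_tau m)). Qed.

Hypotheses (ev_u : eventually_near u) (ev_v : eventually_near v).

Lemma sigma_close_cofinite (e : K) : 0 < e ->
  finite_set [set n | ~ ball (u n) e (v (sigma n))].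
Proof.
(* Beyond index and level [I], matched terms are near [S] at level [I], hence
   [2/(I+1)]-close. *)
move=> e0; have [I Ie] := exists_natSinv_lt (half_gt0 e0).
have Ie2 : 2 * I.+1%:R^-1 <= e by rewrite mulrC -ler_pdivlMr // ltW.
pose Fu := [set n | ~ close_to (u n) I.+1%:R^-1]; pose Fv := [set m | ~ close_to (v m) I.+1%:R^-1].
have fin : finite_set ((`I_I `|` Fu) `|` tau @` (`I_I `|` Fv)).
  rewrite !finite_setU; split; first by split; [exact: finite_II|exact: ev_u].
  by apply: finite_image; rewrite finite_setU; split; [exact: finite_II|exact: ev_v].
apply: sub_finite_set fin => n far; apply: contrapT => /not_orP [/not_orP [In un] nm].
have [Im vm] : ~ `I_I (sigma n) /\ ~ Fv (sigma n).
  by split=> h; apply: nm; exists (sigma n); rewrite ?sigmaK //; [left|right].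
move/negP: In; move/negP: Im; rewrite -!leqNgt => Im In.
apply: far; apply: (le_ball Ie2).
have [] := matched_matchable (matched_sigma n) => close; first exact: close _ In (contrapT un).
exact/ball_sym/(close _ Im (contrapT vm)).
Qed.

End BackAndForth.

Section EnumeratedBasis.
Context {K : realType} {X : metricType K} {A : Type} (alpha : A -> X)
  (e : nat -> A) (e' : A -> nat).

Lemma fcm_support_frequently_near :
  cancel e' e -> frequently_near (fcm_support alpha) (alpha \o e).
Proof.
move=> e'K s ls r r0 /(finite_image (alpha \o e)) fin.
have [_ [_ [[a _ <-] aF] sa]] := limit_pointDfin metric_accessible fin ls (nbhsx_ballx s r r0).
by apply: aF; exists (e' a); rewrite /= e'K.
Qed.

Lemma fcm_support_eventually_near (E : set X) : compact [set: X] -> closed E ->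
  controlled_basis E alpha -> cancel e e' ->
  eventually_near (fcm_support alpha) (alpha \o e).
Proof.
move=> cX cE hA eK r r0; have [aE afin] := hA.
set S := fcm_support alpha; set D := \bigcup_(s in S) ball s r.
have cD : compact (~` D).
  by apply: (subclosed_compact _ cX) => //; exact/open_closedC/open_bigcup_ball.
have finP : finite_set (~` D `&` range alpha).
  apply: contrapT => /(compact_infinite_limit_point cD (@subIsetl _ _ _)) [z Dz lz].
  apply: Dz; exists z; last exact: ballxx.
  by move=> U zU; have [y [yz [_ ay] Uy]] := lz U zU; exists y.
have finA : finite_set (alpha @^-1` (~` D `&` range alpha)).
  by apply: afin; [move=> _ [_ [a _ <-]]; exact: aE|exact: finite_compact].
apply: sub_finite_set (finite_image e' finA) => n far; exists (e n); rewrite ?eK //.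
split; last by exists (e n).
by move=> [s Ss /ball_sym sn]; apply: far; exists s.
Qed.

End EnumeratedBasis.

Section ControlledIsoOfClose.
Context {R : nzRingType} {K : realType} {X : metricType K} (E : set X) {A B : Type}
  (alpha : A -> X) (beta : B -> X).

Lemma controlled_iso_of_close (phi : A -> B) (psi : B -> A) :
  (forall a, ~ E (alpha a)) -> (forall b, ~ E (beta b)) ->
  cancel phi psi -> cancel psi phi ->
  (forall eps : K, 0 < eps -> finite_set [set a | ~ ball (alpha a) eps (beta (phi a))]) ->
  controlled_iso E R alpha beta.
Proof.
move=> aE bE phiK psiK close.
exists (reindex psiK), (reindex phiK).
split; [exact: reindex_rhom|exact: reindex_rhom| | |by split; exact: reindexK].
  exact/(controlled_reindex psiK)/controlled_fun_of_close.
apply: (controlled_reindex phiK (controlled_fun_of_close bE _)) => eps eps0.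
apply: sub_finite_set (finite_image phi (close _ eps0)) => b far.
by exists (psi b); rewrite ?psiK //= => /ball_sym; rewrite psiK.
Qed.

Lemma controlled_iso_of_support_eq : compact [set: X] -> closed E ->
  controlled_basis E alpha -> controlled_basis E beta ->
  fcm_support alpha !=set0 -> fcm_support alpha = fcm_support beta ->
  controlled_iso E R alpha beta.
Proof.
move=> cX cE hA hB ne supp_eq.
have [e1 [e1' [e1K e1'K]]] := fcm_support_enum cX cE hA ne.
rewrite supp_eq in ne; have [e2 [e2' [e2K e2'K]]] := fcm_support_enum cX cE hB ne.
set S := fcm_support alpha.
have freq_u : frequently_near S (alpha \o e1) := fcm_support_frequently_near e1'K.
have freq_v : frequently_near S (beta \o e2).
  by rewrite /S supp_eq; exact: fcm_support_frequently_near.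
have ev_u := fcm_support_eventually_near cX cE hA e1K.
have ev_v : eventually_near S (beta \o e2).
  by rewrite /S supp_eq; exact: fcm_support_eventually_near cX cE hB e2K.
have sgK := sigmaK freq_u freq_v; have tuK := tauK freq_u freq_v.
apply: (controlled_iso_of_close (phi := e2 \o sigma S (alpha \o e1) (beta \o e2) \o e1')
  (psi := e1 \o tau S (alpha \o e1) (beta \o e2) \o e2') hA.1 hB.1).
- by move=> a /=; rewrite e2K sgK e1'K.
- by move=> b /=; rewrite e1K tuK e2'K.
move=> eps eps0; have close := sigma_close_cofinite freq_u freq_v ev_u ev_v eps0.
by apply: sub_finite_set (finite_image e1 close) => a far; exists (e1' a); rewrite /= ?e1'K.
Qed.

End ControlledIsoOfClose.

(** [compact_cover] is stated for pointed spaces; a point is only needed to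
    handle empty covers. *)
Definition pointed_at (T : topologicalType) (x0 : T) : Type := T.
HB.instance Definition _ (T : topologicalType) (x0 : T) := Topological.on (pointed_at x0).
HB.instance Definition _ (T : topologicalType) (x0 : T) := isPointed.Build (pointed_at x0) x0.

Section Realization.
Context {K : realType} {X : metricType K}.

Lemma compact_finite_net (C : set X) (r : K) : compact C -> 0 < r ->
  exists D : {fset X}, {subset D <= C} /\ C `<=` \bigcup_(d in [set` D]) ball d r.
Proof.
move=> cC r0; have [[c0 Cc0]|C0] := pselect (C !=set0); last first.
  by exists fset0%fset; split => // c Cc; case: C0; exists c.
have : @compact (pointed_at c0) C by [].
rewrite compact_cover => /(_ X C (fun d => ball d r) (fun d _ => mball_open d r)).
by case=> [c Cc|D DC cov]; [exists c => //; exact: ballxx|exists D].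
Qed.

Lemma compact_closed_separated (C Z : set X) : compact C -> closed Z ->
  (forall c, C c -> ~ Z c) -> exists N : nat, forall c z, C c -> ball c N.+1%:R^-1 z -> ~ Z z.
Proof.
move=> cC cZ CZ.
have near_off_Z c : C c -> \forall c' \near c & i \near \oo,
    forall z, ball c' (i.+1%:R^-1) z -> ~ Z z.
  move=> Cc; have /nbhs_ballP [r /= r0 rZ] := closed_nbhsC cZ (CZ c Cc).
  have r2 := half_gt0 r0.
  have [M Mr] := exists_natSinv_lt r2.
  exists (ball c (r / 2), [set i | (M <= i)%N]); first by split; [exact: nbhsx_ballx|exists M].
  move=> [c' i] [/= cc' Mi] z c'z; apply: rZ; apply: ball_split cc' _.
  exact: (le_ball (ltW (le_lt_trans (natSinv_le Mi) Mr))).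
have [N _ hN] := (compact_near_coveringP C).1 cC nat \oo _ _ near_off_Z.
by exists N => c z Cc; exact: hN N (leqnn N) c Cc z.
Qed.

Section Levels.
Context {E C : set X} {A : Type} {lvl : A -> nat} {alpha : A -> X}.
Hypotheses (cC : compact C) (CE : C `<=` E) (aE : forall a, ~ E (alpha a))
  (lvl_fin : forall N, finite_set [set a | (lvl a < N)%N])
  (near_C : forall a, exists2 c, C c & ball c (lvl a).+1%:R^-1 (alpha a)).

Lemma levels_finite_off_C (Z : set X) : closed Z -> (forall c, C c -> ~ Z c) ->
  finite_set (alpha @^-1` Z).
Proof.
move=> cZ CZ; have [N CNZ] := compact_closed_separated cC cZ CZ.
apply: sub_finite_set (lvl_fin N) => a /= Za; rewrite ltnNge; apply/negP => Na.
have [c Cc ca] := near_C a; exact: CNZ c _ Cc (le_ball (natSinv_le Na) ca) Za.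
Qed.

Lemma levels_controlled_basis : controlled_basis E alpha.
Proof.
split=> // Z ZE cZ; apply: levels_finite_off_C => [|c Cc /ZE]; last by apply; exact: CE.
exact: (compact_closed (@metric_hausdorff _ X) cZ).
Qed.

Lemma levels_fcm_support_subset : fcm_support alpha `<=` C.
Proof.
have clC : closed C := compact_closed (@metric_hausdorff _ X) cC.
move=> z lz; apply: contrapT => Cz.
have /nbhs_ballP [r /= r0 rC] := closed_nbhsC clC Cz.
apply: not_limit_point_range metric_accessible (nbhs_closed_ball z (half_gt0 r0)) _ lz.
apply: levels_finite_off_C => [|c Cc /(subset_closure_half r0) /rC]; last exact.
exact: closed_ball_closed.
Qed.

End Levels.

Lemma subset_fcm_support (E C : set X) {A : Type} (alpha : A -> X) :
  C `<=` E -> (forall a, ~ E (alpha a)) ->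
  (forall c, C c -> forall r : K, 0 < r -> exists a, ball c r (alpha a)) ->
  C `<=` fcm_support alpha.
Proof.
move=> CE aE approx c Cc U /nbhs_ballP [r /= r0 rU].
have [a ca] := approx c Cc r r0.
exists (alpha a); split; [|by exists a|exact: rU].
by apply/eqP => ac; apply: (aE a); rewrite ac; exact: CE.
Qed.

Lemma fcm_support_realize (E C : set X) : dense (~` E) -> C `<=` E -> compact C ->
  exists (A : Type) (alpha : A -> X), controlled_basis E alpha /\ fcm_support alpha = C.
Proof.
move=> dE CE cC.
have /choice [net netP] n : exists D : {fset X},
    {subset D <= C} /\ C `<=` \bigcup_(d in [set` D]) ball d n.+1%:R^-1.
  exact: compact_finite_net cC (natSinv_gt0 n).
have /choice [y yP] (p : nat * X) : exists y, ~ E y /\ ball p.2 p.1.+1%:R^-1 y.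
  have [y [py Ey]] := dE _ (ex_intro _ p.2 (ballxx p.2 (natSinv_gt0 p.1))) (mball_open _ _).
  by exists y.
pose A := {n : nat & net n}.
pose alpha (a : A) := y (projT1 a, fsval (projT2 a)).
have aE a : ~ E (alpha a) by have [] := yP (projT1 a, fsval (projT2 a)).
have lvl_fin N : finite_set [set a : A | (projT1 a < N)%N].
  have -> : [set a : A | (projT1 a < N)%N] =
      \bigcup_(n in `I_N) ((fun d : net n => existT (fun m => net m) n d) @` setT).
    by apply/seteqP; split => [[n d] /= nN|a [n /= nN [d _ <-]]] //; exists n => //; exists d.
  by apply: bigcup_finite => [|n _]; [exact: finite_II|exact/finite_image/finite_finset].
have near_C a : exists2 c, C c & ball c (projT1 a).+1%:R^-1 (alpha a).
  exists (fsval (projT2 a)); first exact/set_mem/(netP _).1/fsvalP.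
  by have [] := yP (projT1 a, fsval (projT2 a)).
exists A, alpha; split; first exact: levels_controlled_basis cC CE aE lvl_fin near_C.
apply/seteqP; split; first exact: levels_fcm_support_subset cC lvl_fin near_C.
apply: (subset_fcm_support CE aE) => c Cc r r0.
have [n nr] := exists_natSinv_lt (half_gt0 r0).
have [d Dd dc] := (netP n).2 c Cc.
exists (existT _ n [` Dd]%fset) => /=; have [_ dy] := yP (n, d).
by apply: (@ball_split _ _ d); apply: (le_ball (ltW nr)); [exact: ball_sym|exact: dy].
Qed.

End Realization.

Unset Implicit Arguments.

Theorem proposition3p2 (R : nzRingType) (K : realType) (X : metricType K)
    (E : set X) :
  compact [set: X] -> closed E -> E !=set0 -> dense (~` E) ->
  [/\ (forall (A B : Type) (alpha : A -> X) (beta : B -> X),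
         controlled_basis E alpha -> controlled_basis E beta ->
         (controlled_iso E R alpha beta <->
          module_iso R A B /\ fcm_support alpha = fcm_support beta)),
      (forall (A B : Type) (alpha : A -> X) (beta : B -> X),
         controlled_basis E alpha -> controlled_basis E beta ->
         fcm_support alpha !=set0 -> fcm_support beta !=set0 ->
         module_iso R A B) &
      (forall C : set X, C `<=` E -> compact C ->
         exists (A : Type) (alpha : A -> X),
           controlled_basis E alpha /\ fcm_support alpha = C)].
Proof.
move=> cX cE _ dE; split.
- move=> A B alpha beta hA hB; split.
    move=> [f [g [rf rg cf cg [fK gK]]]]; split; first by exists f, g.
    apply/seteqP; split.
      exact: controlled_support_subset hB.1 (fcm_support_subset cX cE hA) cf rf (can_inj fK).
    exact: controlled_support_subset hA.1 (fcm_support_subset cX cE hB) cg rg (can_inj gK).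
  move=> [[f [g [rf rg fK gK]]] supp_eq].
  have [s0|/eqP/set0P ne] := pselect (fcm_support alpha = set0).
    exists f, g; split => //; first exact: controlled_empty_support hA.1 s0.
    by apply: controlled_empty_support hB.1 _; rewrite -supp_eq.
  exact: controlled_iso_of_support_eq.
- move=> A B alpha beta hA hB neA neB.
  have [e1 [e1' [e1K e1'K]]] := fcm_support_enum cX cE hA neA.
  have [e2 [e2' [e2K e2'K]]] := fcm_support_enum cX cE hB neB.
  by apply: (@module_iso_bij _ _ _ (e2 \o e1') (e1 \o e2')) => x /=; rewrite ?e1K ?e2K ?e1'K ?e2'K.
- by move=> C CE cC; exact: fcm_support_realize dE CE cC.
Qed.
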